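(* (De Morgan laws.) (i) For every proposition $A$: $\vdash^H_{\mathbf{CPL*}}\Diamond\neg A\supset\neg\Box A$ and $\vdash^H_{\mathbf{CPL*}}\Box\neg A\supset\neg\Diamond A$. (ii) Neither $\Diamond\neg A\supset\neg\Box A$ nor $\Box\neg A\supset\neg\Diamond A$ is an axiom of CPL. (iii) For every converse well-founded $(W,\prec)$, context $\Gamma$, world $w$ and proposition $A$: if there is no $w'$ with $w\prec w'$ and $\Gamma\Rightarrow\bot[w']$, then $\Gamma\Rightarrow(\Diamond\neg A\supset\neg\Box A)[w]$ and $\Gamma\Rightarrow(\Box\neg A\supset\neg\Diamond A)[w]$. (iv) $\neg\Diamond A\supset\Box\neg A$ is an axiom of neither CPL nor CPL*. (v) $\neg\Box A\supset\Diamond\neg A$ is an axiom of neither CPL nor CPL*.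
   Context: A set $W$ of worlds with a binary accessibility relation $\prec$ is converse well-founded if there is no infinite chain $w_0\prec w_1\prec\cdots$; $\prec^*$ denotes its reflexive–transitive closure. Propositions: $A,B,C ::= Q\mid\bot\mid A\supset B\mid\Diamond A\mid\Box A$ ($Q$ atomic); $\neg A$ abbreviates $A\supset\bot$. A context $\Gamma$ is a finite collection of judgments $A[w]$. All judgments below are defined one world at a time (provability at $w$ after provability at all worlds reachable from $w$ by one or more $\prec$-steps), each as the least relation closed under its rules. CPL natural deduction $\Gamma\vdash_{\mathbf{CPL}}A[w]$: (hyp) $\Gamma,A[w]\vdash A[w]$; ($\bot E$) $\Gamma\vdash\bot[w]$ implies $\Gamma\vdash C[w]$; ($\supset I$) $\Gamma,A[w]\vdash B[w]$ implies $\Gamma\vdash A\supset B[w]$; ($\supset E$) $\Gamma\vdash A\supset B[w]$ and $\Gamma\vdash A[w]$ imply $\Gamma\vdash B[w]$; ($\Diamond I$) $w\prec w'$ and $\Gamma\vdash A[w']$ imply $\Gamma\vdash\Diamond A[w]$; ($\Box I$) if $\Gamma\vdash A[w']$ for all $w'$ with $w\prec w'$ then $\Gamma\vdash\Box A[w]$; ($\Diamond E$) if $\Gamma\vdash\Diamond A[w]$ and for all $w'$ with $w\prec w'$, $\Gamma\vdash A[w']$ implies $\Gamma\vdash C[w]$, then $\Gamma\vdash C[w]$; ($\Box E$) if $\Gamma\vdash\Box A[w]$ and ($\Gamma\vdash A[w']$ for all $w'$ with $w\prec w'$) implies $\Gamma\vdash C[w]$, then $\Gamma\vdash C[w]$.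 CPL* natural deduction $\Gamma\vdash_{\mathbf{CPL*}}A[w]$: identical except ($\bot E$) $w'\prec^* w$ and $\Gamma\vdash\bot[w]$ imply $\Gamma\vdash C[w']$; ($\Diamond E$) if $w''\prec^* w$, $\Gamma\vdash\Diamond A[w]$, and for all $w'$ with $w\prec w'$, $\Gamma\vdash A[w']$ implies $\Gamma\vdash C[w'']$, then $\Gamma\vdash C[w'']$; ($\Box E$) if $w''\prec^* w$, $\Gamma\vdash\Box A[w]$, and ($\Gamma\vdash A[w']$ for all $w'$ with $w\prec w'$) implies $\Gamma\vdash C[w'']$, then $\Gamma\vdash C[w'']$. CPL sequent calculus $\Gamma\Rightarrow A[w]$: (init) $\Gamma,Q[w]\Rightarrow Q[w]$ for $Q$ atomic; ($\bot L$) $\bot[w]\in\Gamma$ implies $\Gamma\Rightarrow C[w]$; ($\supset R$) $\Gamma,A[w]\Rightarrow B[w]$ implies $\Gamma\Rightarrow A\supset B[w]$; ($\supset L$) $A\supset B[w]\in\Gamma$, $\Gamma\Rightarrow A[w]$ and $\Gamma,B[w]\Rightarrow C[w]$ imply $\Gamma\Rightarrow C[w]$; ($\Diamond R$) $w\prec w'$ and $\Gamma\Rightarrow A[w']$ imply $\Gamma\Rightarrow\Diamond A[w]$; ($\Box R$) if $\Gamma\Rightarrow A[w']$ for all $w'$ with $w\prec w'$ then $\Gamma\Rightarrow\Box A[w]$; ($\Diamond L$) if $\Diamond A[w]\in\Gamma$ and for all $w'$ with $w\prec w'$, $\Gamma\Rightarrow A[w']$ implies $\Gamma\Rightarrow C[w]$,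 then $\Gamma\Rightarrow C[w]$; ($\Box L$) if $\Box A[w]\in\Gamma$ and ($\Gamma\Rightarrow A[w']$ for all $w'$ with $w\prec w'$) implies $\Gamma\Rightarrow C[w]$, then $\Gamma\Rightarrow C[w]$. $\vdash^H_{\mathbf{CPL*}}A$ means: for every converse well-founded $(W,\prec)$, every $w\in W$ and every context $\Gamma$, $\Gamma\vdash_{\mathbf{CPL*}}A[w]$. A schema is ''not an axiom'' of CPL (resp. CPL* ) if there exist a converse well-founded $(W,\prec)$, a world $w$, a context $\Gamma$ and an instance $A$ of the schema with $\Gamma\nvdash_{\mathbf{CPL}}A[w]$ (resp. $\Gamma\nvdash_{\mathbf{CPL*}}A[w]$). *)

From Stdlib Require Import List Relations Wellfounded Classical ClassicalEpsilon.
Import ListNotations.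

Inductive form : Type :=
| Atom : nat -> form
| Bot : form
| Imp : form -> form -> form
| Dia : form -> form
| Box : form -> form.

Definition Neg (A : form) : form := Imp A Bot.

Section Judgments.
Context {W : Type} (R : W -> W -> Prop).

Definition ctx := list (form * W).

Definition conv_wf : Prop :=
  ~ exists f : nat -> W, forall n, R (f n) (f (S n)).

Definition Below : W -> W -> Prop := clos_trans W (fun a b => R b a).

Lemma conv_wf_wf : conv_wf -> well_founded (fun a b => R b a).
Proof.
  intros H x0. apply NNPP; intros Hx0.
  assert (Hstep : forall x, ~ Acc (fun a b => R b a) x ->
                    exists y, R x y /\ ~ Acc (fun a b => R b a) y).
  { intros x Hx. apply NNPP; intros Hn. apply Hx. constructor.
    intros y Hy. apply NNPP; intros Hy'. apply Hn. exists y; split; assumption. }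
  set (S := { x : W | ~ Acc (fun a b => R b a) x }).
  assert (next : forall s : S, { t : S | R (proj1_sig s) (proj1_sig t) }).
  { intros [x Hx]. destruct (constructive_indefinite_description _ (Hstep x Hx))
      as [y [Hxy Hy]]. exists (exist _ y Hy). exact Hxy. }
  set (g := fix g (n : nat) : S :=
              match n with 0 => exist _ x0 Hx0 | S n => proj1_sig (next (g n)) end).
  apply H. exists (fun n => proj1_sig (g n)). intros n. simpl.
  exact (proj2_sig (next (g n))).
Qed.

Lemma Below_wf : conv_wf -> well_founded Below.
Proof. intros H. apply wf_clos_trans. apply conv_wf_wf, H. Qed.

(** Stratified definition: the judgment at world [x] is the least relation
    closed under the rules, where premises about strictly later worlds refer
    to the (already defined) judgment there, supplied as [D]. *)
Definition strat (H : conv_wf)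
  (F : W -> (W -> ctx -> form -> Prop) -> ctx -> form -> Prop)
  (G : ctx) (A : form) (w : W) : Prop :=
  Fix (Below_wf H) (fun _ => ctx -> form -> Prop)
      (fun x rec => F x (fun y G' A' => exists h : Below y x, rec y h G' A'))
      w G A.

Inductive cpl_at (x : W) (D : W -> ctx -> form -> Prop) : ctx -> form -> Prop :=
| cpl_hyp G A : In (A, x) G -> cpl_at x D G A
| cpl_botE G C : cpl_at x D G Bot -> cpl_at x D G C
| cpl_impI G A B : cpl_at x D ((A, x) :: G) B -> cpl_at x D G (Imp A B)
| cpl_impE G A B : cpl_at x D G (Imp A B) -> cpl_at x D G A -> cpl_at x D G B
| cpl_diaI G A w' : R x w' -> D w' G A -> cpl_at x D G (Dia A)
| cpl_boxI G A : (forall w', R x w' -> D w' G A) -> cpl_at x D G (Box A)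
| cpl_diaE G A C : cpl_at x D G (Dia A) ->
    (forall w', R x w' -> D w' G A -> cpl_at x D G C) -> cpl_at x D G C
| cpl_boxE G A C : cpl_at x D G (Box A) ->
    ((forall w', R x w' -> D w' G A) -> cpl_at x D G C) -> cpl_at x D G C.

(** The side condition "x <=* w" is split into the cases w = x and
    x <+ w (the latter is encoded in [D w], which includes [Below w x]). *)
Inductive cplstar_at (x : W) (D : W -> ctx -> form -> Prop) : ctx -> form -> Prop :=
| cs_hyp G A : In (A, x) G -> cplstar_at x D G A
| cs_botE_here G C : cplstar_at x D G Bot -> cplstar_at x D G C
| cs_botE_later G C w : D w G Bot -> cplstar_at x D G C
| cs_impI G A B : cplstar_at x D ((A, x) :: G) B -> cplstar_at x D G (Imp A B)
| cs_impE G A B : cplstar_at x D G (Imp A B) -> cplstar_at x D G A -> cplstar_at x D G B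
| cs_diaI G A w' : R x w' -> D w' G A -> cplstar_at x D G (Dia A)
| cs_boxI G A : (forall w', R x w' -> D w' G A) -> cplstar_at x D G (Box A)
| cs_diaE_here G A C : cplstar_at x D G (Dia A) ->
    (forall w', R x w' -> D w' G A -> cplstar_at x D G C) -> cplstar_at x D G C
| cs_diaE_later G A C w : D w G (Dia A) ->
    (forall w', R w w' -> D w' G A -> cplstar_at x D G C) -> cplstar_at x D G C
| cs_boxE_here G A C : cplstar_at x D G (Box A) ->
    ((forall w', R x w' -> D w' G A) -> cplstar_at x D G C) -> cplstar_at x D G C
| cs_boxE_later G A C w : D w G (Box A) ->
    ((forall w', R w w' -> D w' G A) -> cplstar_at x D G C) -> cplstar_at x D G C.

Inductive seq_at (x : W) (D : W -> ctx -> form -> Prop) : ctx -> form -> Prop :=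
| sq_init G q : In (Atom q, x) G -> seq_at x D G (Atom q)
| sq_botL G C : In (Bot, x) G -> seq_at x D G C
| sq_impR G A B : seq_at x D ((A, x) :: G) B -> seq_at x D G (Imp A B)
| sq_impL G A B C : In (Imp A B, x) G -> seq_at x D G A ->
    seq_at x D ((B, x) :: G) C -> seq_at x D G C
| sq_diaR G A w' : R x w' -> D w' G A -> seq_at x D G (Dia A)
| sq_boxR G A : (forall w', R x w' -> D w' G A) -> seq_at x D G (Box A)
| sq_diaL G A C : In (Dia A, x) G ->
    (forall w', R x w' -> D w' G A -> seq_at x D G C) -> seq_at x D G C
| sq_boxL G A C : In (Box A, x) G ->
    ((forall w', R x w' -> D w' G A) -> seq_at x D G C) -> seq_at x D G C.

Definition CPL (H : conv_wf) : ctx -> form -> W -> Prop := strat H cpl_at.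
Definition CPLstar (H : conv_wf) : ctx -> form -> W -> Prop := strat H cplstar_at.
Definition SeqCPL (H : conv_wf) : ctx -> form -> W -> Prop := strat H seq_at.

End Judgments.

Definition provH_star (A : form) : Prop :=
  forall (W : Type) (R : W -> W -> Prop) (H : conv_wf R) (w : W) (G : @ctx W),
    CPLstar R H G A w.

(** A schema (given as a map from its parameter A to the instance) is not an axiom. *)
Definition not_axiom_CPL (schema : form -> form) : Prop :=
  exists (W : Type) (R : W -> W -> Prop) (H : conv_wf R) (w : W) (G : @ctx W) (A : form),
    ~ CPL R H G (schema A) w.

Definition not_axiom_CPLstar (schema : form -> form) : Prop :=
  exists (W : Type) (R : W -> W -> Prop) (H : conv_wf R) (w : W) (G : @ctx W) (A : form),
    ~ CPLstar R H G (schema A) w.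

From Stdlib Require Import List Relations Wellfounded FunctionalExtensionality PropExtensionality.
Import ListNotations.

(* In CPL*, a [Dia (Neg A)] and a [Box A] hypothesis at [w] meet at any successor [w'],
   where [A] and [Neg A] yield [Bot]; the CPL* form of bot-elimination exports this
   contradiction back to [w].  In the sequent calculus the same meeting yields
   [G => Bot] at [w'] only through admissibility of cut, which holds world by world
   because the premises at later worlds are already-fixed judgments; the hypothesis of
   (iii) rules this out.  The remaining parts are refuted on the frame [true < false]:
   at the root, [Dia B] and [Box B] both mean that [B] is derivable at the dead end
   [false], where derivations are sound for two-valued valuations reading [Dia] as
   false and [Box] as true.  A hypothesis [Bot] at [false] makes everything derivable
   there, refuting (ii); from the empty context neither [q] nor [Neg q] is, refuting
   (iv) and (v). *)

Section Stratification.
Context {W : Type} (R : W -> W -> Prop) (H : conv_wf R).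

Definition later_judgment (F : W -> (W -> @ctx W -> form -> Prop) -> @ctx W -> form -> Prop)
    (x y : W) (G : @ctx W) (A : form) : Prop :=
  exists _ : Below R y x, strat R H F G A y.

Lemma strat_unfold F G A x : strat R H F G A x = F x (later_judgment F x) G A.
Proof.
  unfold strat at 1. rewrite Fix_eq; [reflexivity|].
  intros x0 f g Hfg. f_equal.
  apply functional_extensionality; intro y.
  apply functional_extensionality; intro G'.
  apply functional_extensionality; intro A'.
  apply propositional_extensionality.
  split; intros [h Hh]; exists h; [rewrite <- Hfg | rewrite Hfg]; exact Hh.
Qed.

Lemma Below_irrefl x : ~ Below R x x.
Proof.
  induction (Below_wf R H x) as [x _ IH]. intro Hx. exact (IH x Hx Hx).
Qed.

End Stratification.

Section Sequent.
Context {W : Type} (R : W -> W -> Prop) (H : conv_wf R).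

(* Only hypotheses at [x] and at later worlds matter at [x]; the later ones must agree
   exactly, since the modal left rules use later judgments as assumptions. *)
Definition agree_later (x : W) (G K : @ctx W) : Prop :=
  forall z B, Below R z x -> (In (B, z) G <-> In (B, z) K).

Definition ctx_le (x : W) (G K : @ctx W) : Prop :=
  (forall B, In (B, x) G -> In (B, x) K) /\ agree_later x G K.

Lemma agree_later_sym x G K : agree_later x G K -> agree_later x K G.
Proof. intros Hag z B Hz. symmetry. exact (Hag z B Hz). Qed.

Lemma agree_later_cons x A G : agree_later x ((A, x) :: G) G.
Proof.
  intros z B Hz. simpl. split; [|now right].
  intros [E | Hin]; [|exact Hin].
  injection E as _ ->. destruct (Below_irrefl R H _ Hz).
Qed.

Lemma agree_later_drop_cons x A G K :
  agree_later x G ((A, x) :: K) -> agree_later x G K.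
Proof.
  intros Hag z B Hz. rewrite (Hag z B Hz). exact (agree_later_cons x A K z B Hz).
Qed.

Lemma agree_later_ctx_le x y G K :
  agree_later x G K -> Below R y x -> ctx_le y G K.
Proof.
  intros Hag Hy. split.
  - intros B. apply (Hag y B Hy).
  - intros z B Hz. apply Hag. eapply t_trans; eassumption.
Qed.

Lemma ctx_le_of_same_elements x G K : (forall p, In p G <-> In p K) -> ctx_le x G K.
Proof. intros HGK. split; [intros B; apply HGK | intros z B _; apply HGK]. Qed.

Lemma ctx_le_trans x G K L : ctx_le x G K -> ctx_le x K L -> ctx_le x G L.
Proof.
  intros [HGK HagGK] [HKL HagKL]. split; [auto|].
  intros z B Hz. rewrite (HagGK z B Hz). exact (HagKL z B Hz).
Qed.

Lemma ctx_le_cons x A G K : ctx_le x G K -> ctx_le x ((A, x) :: G) ((A, x) :: K).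
Proof.
  intros [HGK Hag]. split.
  - intros B [E | Hin]; [now left | right; auto].
  - intros z B Hz. simpl. rewrite (Hag z B Hz). reflexivity.
Qed.

Lemma ctx_le_cons_r x A G : ctx_le x G ((A, x) :: G).
Proof.
  split; [intros B Hin; now right|]. apply agree_later_sym, agree_later_cons.
Qed.

Lemma ctx_le_swap x A B G : ctx_le x ((A, x) :: (B, x) :: G) ((B, x) :: (A, x) :: G).
Proof. apply ctx_le_of_same_elements. intros p. simpl. tauto. Qed.

Lemma ctx_le_cons_under x A B K G :
  ctx_le x K ((A, x) :: G) -> ctx_le x ((B, x) :: K) ((A, x) :: (B, x) :: G).
Proof.
  intros Hle. apply ctx_le_trans with ((B, x) :: (A, x) :: G);
    [apply ctx_le_cons, Hle | apply ctx_le_swap].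
Qed.

Lemma ctx_le_strip x w X G : Below R x w -> ctx_le x ((X, w) :: G) G.
Proof.
  intros Hxw. split.
  - intros B [E | Hin]; [|exact Hin].
    injection E as _ ->. destruct (Below_irrefl R H _ Hxw).
  - intros z B Hz. simpl. split; [|now right].
    intros [E | Hin]; [|exact Hin]. injection E as _ ->.
    destruct (Below_irrefl R H z). eapply t_trans; eassumption.
Qed.

Local Notation later := (later_judgment R H (seq_at R)).
Local Notation Sq x G C := (seq_at R x (later x) G C).

Lemma SeqCPL_unfold G C x : SeqCPL R H G C x = Sq x G C.
Proof. apply strat_unfold. Qed.

Lemma seq_weaken x : forall G K C, ctx_le x G K -> Sq x G C -> Sq x K C.
Proof.
  induction x as [x IHx] using (well_founded_induction (Below_wf R H)).
  assert (Hlater : forall y G K A, agree_later x G K -> later x y G A -> later x y K A).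
  { intros y G K A Hag [Hy HA]. exists Hy. unfold SeqCPL in *.
    rewrite strat_unfold in HA |- *.
    exact (IHx y Hy G K A (agree_later_ctx_le _ _ _ _ Hag Hy) HA). }
  intros G K C Hle Hd. revert K Hle.
  induction Hd as [G q Hq | G C Hb | G A B _ IH | G A B C Hi _ IHA _ IHC
                  | G A w' Hr Hl | G A Hl | G A C Hi _ IH | G A C Hi _ IH];
    intros K [Hx Hag].
  - apply sq_init; auto.
  - apply sq_botL; auto.
  - apply sq_impR, IH, ctx_le_cons. split; assumption.
  - apply sq_impL with A B; auto.
    + apply IHA. split; assumption.
    + apply IHC, ctx_le_cons. split; assumption.
  - apply sq_diaR with w'; [exact Hr | exact (Hlater _ _ _ _ Hag Hl)].
  - apply sq_boxR. intros w' Hr. exact (Hlater _ _ _ _ Hag (Hl w' Hr)).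
  - apply sq_diaL with A; [auto|]. intros w' Hr Hl.
    apply (IH w' Hr); [|split; assumption].
    exact (Hlater _ _ _ _ (agree_later_sym _ _ _ Hag) Hl).
  - apply sq_boxL with A; [auto|]. intros Hl.
    apply IH; [|split; assumption]. intros w' Hr.
    exact (Hlater _ _ _ _ (agree_later_sym _ _ _ Hag) (Hl w' Hr)).
Qed.

Lemma later_transport x y G K A : agree_later x G K -> later x y G A -> later x y K A.
Proof.
  intros Hag [Hy HA]. exists Hy. unfold SeqCPL in *.
  rewrite strat_unfold in HA |- *.
  exact (seq_weaken y G K A (agree_later_ctx_le _ _ _ _ Hag Hy) HA).
Qed.

Lemma later_drop_cons x y A G B : later x y ((A, x) :: G) B -> later x y G B.
Proof. apply later_transport, agree_later_cons. Qed.

Lemma seq_botE x G C : Sq x G Bot -> Sq x G C.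
Proof.
  intros Hd. remember Bot as F eqn:EF.
  induction Hd as [| | | G A B C' Hi HA _ _ IHC | | | G A C' Hi _ IH | G A C' Hi _ IH];
    subst; try discriminate.
  - apply sq_botL; assumption.
  - apply sq_impL with A B; [exact Hi | exact HA | exact (IHC eq_refl)].
  - apply sq_diaL with A; [exact Hi|]. intros w' Hr Hl. exact (IH w' Hr Hl eq_refl).
  - apply sq_boxL with A; [exact Hi|]. intros Hl. exact (IH Hl eq_refl).
Qed.

Lemma seq_impR_inv x G A B : Sq x G (Imp A B) -> Sq x ((A, x) :: G) B.
Proof.
  intros Hd. remember (Imp A B) as F eqn:EF.
  induction Hd as [| G0 C Hb | G0 A0 B0 Hd _ | G0 A0 B0 C Hi HA _ _ IHC
                  | | | G0 A0 C Hi _ IH | G0 A0 C Hi _ IH]; try discriminate.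
  - apply sq_botL. now right.
  - injection EF as -> ->. exact Hd.
  - apply sq_impL with A0 B0; [now right | |].
    + apply (seq_weaken x G0); [apply ctx_le_cons_r | exact HA].
    + apply (seq_weaken x ((A, x) :: (B0, x) :: G0)); [apply ctx_le_swap | auto].
  - apply sq_diaL with A0; [now right|].
    intros w' Hr Hl. exact (IH w' Hr (later_drop_cons _ _ _ _ _ Hl) EF).
  - apply sq_boxL with A0; [now right|].
    intros Hl. apply IH; [|exact EF].
    intros w' Hr. exact (later_drop_cons _ _ _ _ _ (Hl w' Hr)).
Qed.

Lemma seq_diaE x G A C :
  Sq x G (Dia A) -> (forall w', R x w' -> later x w' G A -> Sq x G C) -> Sq x G C.
Proof.
  intros Hd. remember (Dia A) as F eqn:EF.
  induction Hd as [| | | G0 A0 B0 C0 Hi HA _ _ IHC | G0 A0 w' Hr Hl | | G0 A0 C0 Hi _ IH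
                  | G0 A0 C0 Hi _ IH];
    intros Hk; subst; try discriminate.
  - apply sq_botL; assumption.
  - apply sq_impL with A0 B0; [assumption | exact HA|].
    apply IHC; [reflexivity|]. intros w' Hr Hl.
    apply (seq_weaken x G0); [apply ctx_le_cons_r|].
    exact (Hk w' Hr (later_drop_cons _ _ _ _ _ Hl)).
  - injection EF as <-. exact (Hk w' Hr Hl).
  - apply sq_diaL with A0; [exact Hi|]. intros w' Hr Hl. exact (IH w' Hr Hl eq_refl Hk).
  - apply sq_boxL with A0; [exact Hi|]. intros Hl. exact (IH Hl eq_refl Hk).
Qed.

Lemma seq_boxE x G A C :
  Sq x G (Box A) -> ((forall w', R x w' -> later x w' G A) -> Sq x G C) -> Sq x G C.
Proof.
  intros Hd. remember (Box A) as F eqn:EF.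
  induction Hd as [| | | G0 A0 B0 C0 Hi HA _ _ IHC | | G0 A0 Hl | G0 A0 C0 Hi _ IH
                  | G0 A0 C0 Hi _ IH];
    intros Hk; subst; try discriminate.
  - apply sq_botL; assumption.
  - apply sq_impL with A0 B0; [assumption | exact HA|].
    apply IHC; [reflexivity|]. intros Hl.
    apply (seq_weaken x G0); [apply ctx_le_cons_r|].
    apply Hk. intros w' Hr. exact (later_drop_cons _ _ _ _ _ (Hl w' Hr)).
  - injection EF as <-. exact (Hk Hl).
  - apply sq_diaL with A0; [exact Hi|]. intros w' Hr Hl. exact (IH w' Hr Hl eq_refl Hk).
  - apply sq_boxL with A0; [exact Hi|]. intros Hl. exact (IH Hl eq_refl Hk).
Qed.

Definition cut_admissible (A : form) : Prop :=
  forall x G C, Sq x G A -> Sq x ((A, x) :: G) C -> Sq x G C.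

(* The modal principal cases need no cut on [A]: their premises are judgments
   at later worlds, which the stratification hands over unchanged. *)
Lemma cut_admissible_of_imp_subformulas A :
  (forall B1 B2, A = Imp B1 B2 -> cut_admissible B1 /\ cut_admissible B2) ->
  cut_admissible A.
Proof.
  intros IHA x G C HA HC.
  enough (Hgen : forall K C, Sq x K C -> forall G, ctx_le x K ((A, x) :: G) ->
                   Sq x G A -> Sq x G C)
    by exact (Hgen _ C HC G (ctx_le_of_same_elements x _ _ (fun _ => iff_refl _)) HA).
  clear G C HA HC. intros K C HC.
  induction HC as [K q Hi | K C Hi | K A0 B0 _ IH | K A0 B0 C Hi _ IHA0 _ IHC
                  | K A0 w' Hr Hl | K A0 Hl | K A0 C Hi _ IH | K A0 C Hi _ IH];
    intros G [Hx Hag] HA; assert (Hag' := agree_later_drop_cons _ _ _ _ Hag).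
  - destruct (Hx _ Hi) as [E | Hq]; [injection E as ->; exact HA | apply sq_init, Hq].
  - destruct (Hx _ Hi) as [E | Hb]; [injection E as ->; exact (seq_botE _ _ _ HA)|].
    apply sq_botL, Hb.
  - apply sq_impR, IH; [apply ctx_le_cons_under; split; assumption|].
    exact (seq_weaken x G _ _ (ctx_le_cons_r _ _ _) HA).
  - assert (HA0 : Sq x G A0) by (apply IHA0; [split|]; assumption).
    assert (HC' : Sq x ((B0, x) :: G) C).
    { apply IHC; [apply ctx_le_cons_under; split; assumption|].
      exact (seq_weaken x G _ _ (ctx_le_cons_r _ _ _) HA). }
    destruct (Hx _ Hi) as [E | Himp].
    + injection E as ->. destruct (IHA A0 B0 eq_refl) as [cutA0 cutB0].
      apply (cutB0 x G C); [|exact HC'].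
      exact (cutA0 x G B0 HA0 (seq_impR_inv _ _ _ _ HA)).
    + apply sq_impL with A0 B0; assumption.
  - apply sq_diaR with w'; [exact Hr | exact (later_transport _ _ _ _ _ Hag' Hl)].
  - apply sq_boxR. intros w' Hr. exact (later_transport _ _ _ _ _ Hag' (Hl w' Hr)).
  - assert (Hk : forall w', R x w' -> later x w' G A0 -> Sq x G C).
    { intros w' Hr Hl. apply (IH w' Hr); [|split|]; try assumption.
      exact (later_transport _ _ _ _ _ (agree_later_sym _ _ _ Hag') Hl). }
    destruct (Hx _ Hi) as [E | Hdia]; [injection E as ->; exact (seq_diaE _ _ _ _ HA Hk)|].
    apply sq_diaL with A0; assumption.
  - assert (Hk : (forall w', R x w' -> later x w' G A0) -> Sq x G C).
    { intros Hl. apply IH; [|split|]; try assumption. intros w' Hr.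
      exact (later_transport _ _ _ _ _ (agree_later_sym _ _ _ Hag') (Hl w' Hr)). }
    destruct (Hx _ Hi) as [E | Hbox]; [injection E as ->; exact (seq_boxE _ _ _ _ HA Hk)|].
    apply sq_boxL with A0; assumption.
Qed.

Lemma seq_cut A : cut_admissible A.
Proof.
  induction A; apply cut_admissible_of_imp_subformulas; intros B1 B2 E; try discriminate.
  injection E as -> <-. split; assumption.
Qed.

Lemma SeqCPL_impE G A B x :
  SeqCPL R H G (Imp A B) x -> SeqCPL R H G A x -> SeqCPL R H G B x.
Proof.
  rewrite !SeqCPL_unfold. intros Himp HA.
  exact (seq_cut A x G B HA (seq_impR_inv _ _ _ _ Himp)).
Qed.

Lemma SeqCPL_dia_box_clash G P Q C w :
  In (Dia P, w) G -> In (Box Q, w) G ->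
  (forall w', R w w' -> SeqCPL R H G P w' -> SeqCPL R H G Q w' -> False) ->
  SeqCPL R H G C w.
Proof.
  intros HP HQ Hclash. rewrite SeqCPL_unfold.
  apply sq_diaL with P; [exact HP|]. intros w' Hr [_ DP].
  apply sq_boxL with Q; [exact HQ|]. intros HallQ.
  destruct (HallQ w' Hr) as [_ DQ]. destruct (Hclash w' Hr DP DQ).
Qed.

Lemma SeqCPL_de_morgan G w A :
  ~ (exists w', R w w' /\ SeqCPL R H G Bot w') ->
  SeqCPL R H G (Imp (Dia (Neg A)) (Neg (Box A))) w /\
  SeqCPL R H G (Imp (Box (Neg A)) (Neg (Dia A))) w.
Proof.
  intros Hcons.
  assert (Hstrip : forall X Y w', R w w' ->
            SeqCPL R H ((X, w) :: (Y, w) :: G) Bot w' -> False).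
  { intros X Y w' Hr Hbot. apply Hcons. exists w'. split; [exact Hr|].
    assert (Hw' : Below R w' w) by (apply t_step; exact Hr).
    rewrite SeqCPL_unfold in *.
    apply (seq_weaken w' ((Y, w) :: G)); [apply ctx_le_strip, Hw'|].
    apply (seq_weaken w' ((X, w) :: (Y, w) :: G)); [apply ctx_le_strip, Hw' | exact Hbot]. }
  unfold Neg. split; rewrite SeqCPL_unfold; apply sq_impR, sq_impR; rewrite <- SeqCPL_unfold.
  - apply SeqCPL_dia_box_clash with (Imp A Bot) A; [now right; left | now left |].
    intros w' Hr HnA HA. exact (Hstrip _ _ w' Hr (SeqCPL_impE _ _ _ _ HnA HA)).
  - apply SeqCPL_dia_box_clash with A (Imp A Bot); [now left | now right; left |].
    intros w' Hr HA HnA. exact (Hstrip _ _ w' Hr (SeqCPL_impE _ _ _ _ HnA HA)).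
Qed.

End Sequent.

Section NaturalDeduction.
Context {W : Type} (R : W -> W -> Prop) (H : conv_wf R).

Lemma CPL_unfold G C x : CPL R H G C x = cpl_at R x (later_judgment R H (cpl_at R) x) G C.
Proof. apply strat_unfold. Qed.

Lemma CPLstar_unfold G C x :
  CPLstar R H G C x = cplstar_at R x (later_judgment R H (cplstar_at R) x) G C.
Proof. apply strat_unfold. Qed.

Lemma CPLstar_dia_box_clash G P Q C w :
  CPLstar R H G (Dia P) w -> CPLstar R H G (Box Q) w ->
  (forall w', R w w' -> CPLstar R H G P w' -> CPLstar R H G Q w' -> CPLstar R H G Bot w') ->
  CPLstar R H G C w.
Proof.
  rewrite !CPLstar_unfold. intros HP HQ Hclash.
  apply cs_diaE_here with P; [exact HP|]. intros w' Hr [Hw' DP].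
  apply cs_boxE_here with Q; [exact HQ|]. intros HallQ.
  destruct (HallQ w' Hr) as [_ DQ].
  apply cs_botE_later with w'. exists Hw'. exact (Hclash w' Hr DP DQ).
Qed.

Lemma CPLstar_de_morgan G w A :
  CPLstar R H G (Imp (Dia (Neg A)) (Neg (Box A))) w /\
  CPLstar R H G (Imp (Box (Neg A)) (Neg (Dia A))) w.
Proof.
  assert (Hhyp : forall G B, In (B, w) G -> CPLstar R H G B w)
    by (intros; rewrite CPLstar_unfold; apply cs_hyp; assumption).
  assert (HimpE : forall G B w', CPLstar R H G (Neg B) w' -> CPLstar R H G B w' ->
                    CPLstar R H G Bot w')
    by (intros until w'; rewrite !CPLstar_unfold; apply cs_impE).
  unfold Neg. split; rewrite CPLstar_unfold; apply cs_impI, cs_impI; rewrite <- CPLstar_unfold.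
  - apply CPLstar_dia_box_clash with (Imp A Bot) A; [apply Hhyp; now right; left
                                                    | apply Hhyp; now left |].
    intros w' _ HnA HA. exact (HimpE _ _ _ HnA HA).
  - apply CPLstar_dia_box_clash with A (Imp A Bot); [apply Hhyp; now left
                                                    | apply Hhyp; now right; left |].
    intros w' _ HA HnA. exact (HimpE _ _ _ HnA HA).
Qed.

Lemma CPL_of_Bot_hyp G A x : In (Bot, x) G -> CPL R H G A x.
Proof. rewrite CPL_unfold. intros Hb. apply cpl_botE, cpl_hyp, Hb. Qed.

End NaturalDeduction.

Fixpoint dead_end_val (V : nat -> Prop) (A : form) : Prop :=
  match A with
  | Atom q => V q
  | Bot => False
  | Imp A B => dead_end_val V A -> dead_end_val V B
  | Dia _ => False
  | Box _ => True
  end.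

Section DeadEnd.
Context {W : Type} (R : W -> W -> Prop) (H : conv_wf R) (x : W) (Hx : forall y, ~ R x y).

Lemma Below_dead_end y : ~ Below R y x.
Proof.
  intros Hb. apply clos_trans_tn1 in Hb.
  destruct Hb as [z Hr | z z' Hr _]; exact (Hx _ Hr).
Qed.

Lemma CPL_dead_end_sound V G C :
  CPL R H G C x -> (forall B, In (B, x) G -> dead_end_val V B) -> dead_end_val V C.
Proof.
  rewrite CPL_unfold. intros Hd.
  induction Hd as [G A Hi | G C _ IH | G A B _ IH | G A B _ IHimp _ IHA
                  | G A w' Hr _ | G A _ | G A C _ IH _ _ | G A C _ _ _ IHk];
    intros HG; simpl in *.
  - exact (HG A Hi).
  - destruct (IH HG).
  - intros HA. apply IH. intros B0 [E | Hin]; [injection E as <-; exact HA | auto].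
  - exact (IHimp HG (IHA HG)).
  - destruct (Hx _ Hr).
  - exact I.
  - destruct (IH HG).
  - apply IHk; [|exact HG]. intros w' Hr. destruct (Hx _ Hr).
Qed.

Lemma CPL_dead_end_mono G K C :
  (forall B, In (B, x) G -> In (B, x) K) -> CPL R H G C x -> CPL R H K C x.
Proof.
  rewrite !CPL_unfold. intros HGK Hd. revert K HGK.
  induction Hd as [G A Hi | G C _ IH | G A B _ IH | G A B _ IHimp _ IHA
                  | G A w' Hr _ | G A _ | G A C _ IH _ _ | G A C _ IH _ IHk];
    intros K HGK.
  - apply cpl_hyp; auto.
  - apply cpl_botE; auto.
  - apply cpl_impI, IH. intros B0 [E | Hin]; [now left | right; auto].
  - apply cpl_impE with A; auto.
  - destruct (Hx _ Hr).
  - apply cpl_boxI. intros w' Hr. destruct (Hx _ Hr).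
  - apply cpl_diaE with A; [auto|]. intros w' Hr. destruct (Hx _ Hr).
  - apply cpl_boxE with A; [auto|]. intros _.
    exact (IHk (fun w' Hr => match Hx _ Hr with end) K HGK).
Qed.

(* At a dead end the later-world rules of CPL* have no instances, and the modal
   rules of both calculi no premises at later worlds. *)
Lemma CPLstar_dead_end_iff G C : CPLstar R H G C x <-> CPL R H G C x.
Proof.
  rewrite CPL_unfold, CPLstar_unfold. split; intros Hd.
  - induction Hd as [G A Hi | G C _ IH | G C w [Hw _] | G A B _ IH | G A B _ IHimp _ IHA
                    | G A w' Hr _ | G A _ | G A C _ IH _ _ | G A C w [Hw _] _ _
                    | G A C _ IH _ IHk | G A C w [Hw _] _ _];
      try destruct (Below_dead_end _ Hw).
    + apply cpl_hyp, Hi.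
    + apply cpl_botE, IH.
    + apply cpl_impI, IH.
    + apply cpl_impE with A; assumption.
    + destruct (Hx _ Hr).
    + apply cpl_boxI. intros w' Hr. destruct (Hx _ Hr).
    + apply cpl_diaE with A; [exact IH|]. intros w' Hr. destruct (Hx _ Hr).
    + apply cpl_boxE with A; [exact IH|]. intros _.
      apply IHk. intros w' Hr. destruct (Hx _ Hr).
  - induction Hd as [G A Hi | G C _ IH | G A B _ IH | G A B _ IHimp _ IHA
                    | G A w' Hr _ | G A _ | G A C _ IH _ _ | G A C _ IH _ IHk].
    + apply cs_hyp, Hi.
    + apply cs_botE_here, IH.
    + apply cs_impI, IH.
    + apply cs_impE with A; assumption.
    + destruct (Hx _ Hr).
    + apply cs_boxI. intros w' Hr. destruct (Hx _ Hr).
    + apply cs_diaE_here with A; [exact IH|]. intros w' Hr. destruct (Hx _ Hr).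
    + apply cs_boxE_here with A; [exact IH|]. intros _.
      apply IHk. intros w' Hr. destruct (Hx _ Hr).
Qed.

Lemma CPL_dead_end_empty_sound V C : CPL R H [] C x -> dead_end_val V C.
Proof. intros Hd. apply (CPL_dead_end_sound V _ _ Hd). intros B []. Qed.

Lemma CPL_dead_end_atom q : ~ CPL R H [] (Atom q) x.
Proof. exact (CPL_dead_end_empty_sound (fun _ => False) (Atom q)). Qed.

Lemma CPL_dead_end_neg_atom q : ~ CPL R H [] (Neg (Atom q)) x.
Proof. intros Hd. exact (CPL_dead_end_empty_sound (fun _ => True) _ Hd I). Qed.

End DeadEnd.

Definition two_step (a b : bool) : Prop := a = true /\ b = false.

Lemma two_step_conv_wf : conv_wf two_step.
Proof.
  intros [f Hf]. destruct (Hf 0) as [_ E1], (Hf 1) as [E2 _]. congruence.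
Qed.

Lemma two_step_dead_end : forall y, ~ two_step false y.
Proof. intros y [E _]. discriminate. Qed.

Lemma two_step_true_false : two_step true false.
Proof. split; reflexivity. Qed.

Lemma Below_false_true : Below two_step false true.
Proof. exact (t_step _ _ false true two_step_true_false). Qed.

Lemma Below_two_step {y x} : Below two_step y x -> y = false.
Proof.
  intros Hb. apply clos_trans_t1n in Hb. destruct Hb as [_ [_ E] | _ _ [_ E] _]; exact E.
Qed.

Local Notation CPL2 := (CPL two_step two_step_conv_wf).
Local Notation CPLstar2 := (CPLstar two_step two_step_conv_wf).

Lemma CPL2_false_congr G K B :
  (forall B, In (B, false) G <-> In (B, false) K) -> CPL2 G B false -> CPL2 K B false.
Proof. intros HGK. apply CPL_dead_end_mono; [exact two_step_dead_end | apply HGK]. Qed.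

Lemma CPLstar2_false_iff G B :
  (forall B, ~ In (B, false) G) -> CPLstar2 G B false <-> CPL2 [] B false.
Proof.
  intros HG. rewrite (CPLstar_dead_end_iff _ _ _ two_step_dead_end).
  split; apply CPL2_false_congr; intros B0; split; try intros [];
    intros Hin; destruct (HG _ Hin).
Qed.

Fixpoint root_val (P : form -> Prop) (A : form) : Prop :=
  match A with
  | Atom _ | Bot => False
  | Imp A B => root_val P A -> root_val P B
  | Dia B | Box B => P B
  end.

Lemma CPL_root_sound G0 G C :
  CPL2 G C true ->
  (forall B, In (B, false) G <-> In (B, false) G0) ->
  (forall B, In (B, true) G -> root_val (fun B => CPL2 G0 B false) B) ->
  root_val (fun B => CPL2 G0 B false) C.
Proof.
  rewrite CPL_unfold. intros Hd.
  induction Hd as [G A Hi | G C _ IH | G A B _ IH | G A B _ IHimp _ IHA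
                  | G A w' Hr [_ HA] | G A Hl | G A C _ IH _ IHk | G A C _ IH _ IHk];
    intros Hf Ht; simpl in *.
  - exact (Ht A Hi).
  - destruct (IH Hf Ht).
  - intros HA. apply IH.
    + intros B0. simpl. rewrite <- Hf.
      split; [intros [E | Hin]; [discriminate | exact Hin] | now right].
    + intros B0 [E | Hin]; [injection E as <-; exact HA | auto].
  - exact (IHimp Hf Ht (IHA Hf Ht)).
  - destruct Hr as [_ ->]. exact (CPL2_false_congr _ _ _ Hf HA).
  - destruct (Hl false two_step_true_false) as [_ HA]. exact (CPL2_false_congr _ _ _ Hf HA).
  - apply (IHk false two_step_true_false); [|exact Hf | exact Ht].
    exists Below_false_true.
    apply CPL2_false_congr with G0; [intros B; symmetry; apply Hf | exact (IH Hf Ht)].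
  - apply IHk; [|exact Hf | exact Ht]. intros w' [_ ->].
    exists Below_false_true.
    apply CPL2_false_congr with G0; [intros B; symmetry; apply Hf | exact (IH Hf Ht)].
Qed.

Lemma CPLstar_root_sound G C :
  CPLstar2 G C true ->
  (forall B, ~ In (B, false) G) ->
  (forall B, In (B, true) G -> root_val (fun B => CPL2 [] B false) B) ->
  root_val (fun B => CPL2 [] B false) C.
Proof.
  rewrite CPLstar_unfold. intros Hd.
  assert (Hsound : forall G B, (forall B, ~ In (B, false) G) ->
                     CPLstar2 G B false -> dead_end_val (fun _ => False) B).
  { intros G' B HG' HB. apply (CPLstar2_false_iff _ _ HG') in HB.
    exact (CPL_dead_end_empty_sound _ _ _ two_step_dead_end _ _ HB). }
  induction Hd as [G A Hi | G C _ IH | G C w [Hw HB] | G A B _ IH | G A B _ IHimp _ IHA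
                  | G A w' Hr [_ HA] | G A Hl | G A C _ IH _ IHk | G A C w [Hw HA] _ _
                  | G A C _ IH _ IHk | G A C w [Hw _] _ IHk];
    intros Hf Ht; simpl in *.
  - exact (Ht A Hi).
  - destruct (IH Hf Ht).
  - rewrite (Below_two_step Hw) in HB. destruct (Hsound G Bot Hf HB).
  - intros HA. apply IH.
    + intros B0 [E | Hin]; [discriminate | exact (Hf B0 Hin)].
    + intros B0 [E | Hin]; [injection E as <-; exact HA | auto].
  - exact (IHimp Hf Ht (IHA Hf Ht)).
  - destruct Hr as [_ ->]. exact (proj1 (CPLstar2_false_iff _ _ Hf) HA).
  - destruct (Hl false two_step_true_false) as [_ HA].
    exact (proj1 (CPLstar2_false_iff _ _ Hf) HA).
  - apply (IHk false two_step_true_false); [|exact Hf | exact Ht].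
    exists Below_false_true.
    exact (proj2 (CPLstar2_false_iff _ _ Hf) (IH Hf Ht)).
  - rewrite (Below_two_step Hw) in HA. destruct (Hsound G (Dia A) Hf HA).
  - apply IHk; [|exact Hf | exact Ht]. intros w' [_ ->].
    exists Below_false_true.
    exact (proj2 (CPLstar2_false_iff _ _ Hf) (IH Hf Ht)).
  - apply IHk; [|exact Hf | exact Ht]. rewrite (Below_two_step Hw).
    intros w' Hr. destruct (two_step_dead_end _ Hr).
Qed.

Lemma not_axiom_CPL_of_root_refutation (schema : form -> form) G0 A :
  (forall B, ~ In (B, true) G0) ->
  ~ root_val (fun B => CPL2 G0 B false) (schema A) ->
  not_axiom_CPL schema.
Proof.
  intros Hroot Hrefute. exists bool, two_step, two_step_conv_wf, true, G0, A.
  intros Hd. apply Hrefute, (CPL_root_sound G0 G0 _ Hd); [reflexivity|].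
  intros B Hin. destruct (Hroot _ Hin).
Qed.

Lemma not_axiom_CPLstar_of_root_refutation (schema : form -> form) A :
  ~ root_val (fun B => CPL2 [] B false) (schema A) -> not_axiom_CPLstar schema.
Proof.
  intros Hrefute. exists bool, two_step, two_step_conv_wf, true, [], A.
  intros Hd. apply Hrefute, (CPLstar_root_sound [] _ Hd); intros B [].
Qed.

Theorem theorem8 :
  (* (i) *)
  (forall A : form,
      provH_star (Imp (Dia (Neg A)) (Neg (Box A))) /\
      provH_star (Imp (Box (Neg A)) (Neg (Dia A)))) /\
  (* (ii) *)
  not_axiom_CPL (fun A => Imp (Dia (Neg A)) (Neg (Box A))) /\
  not_axiom_CPL (fun A => Imp (Box (Neg A)) (Neg (Dia A))) /\
  (* (iii) *)
  (forall (W : Type) (R : W -> W -> Prop) (H : conv_wf R) (G : @ctx W) (w : W) (A : form),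
      ~ (exists w', R w w' /\ SeqCPL R H G Bot w') ->
      SeqCPL R H G (Imp (Dia (Neg A)) (Neg (Box A))) w /\
      SeqCPL R H G (Imp (Box (Neg A)) (Neg (Dia A))) w) /\
  (* (iv) *)
  (not_axiom_CPL (fun A => Imp (Neg (Dia A)) (Box (Neg A))) /\
   not_axiom_CPLstar (fun A => Imp (Neg (Dia A)) (Box (Neg A)))) /\
  (* (v) *)
  (not_axiom_CPL (fun A => Imp (Neg (Box A)) (Dia (Neg A))) /\
   not_axiom_CPLstar (fun A => Imp (Neg (Box A)) (Dia (Neg A)))).
Proof.
  assert (Hall : forall B, CPL2 [(Bot, false)] B false)
    by (intros B; apply CPL_of_Bot_hyp; now left).
  assert (Hq := CPL_dead_end_atom _ two_step_conv_wf _ two_step_dead_end 0).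
  assert (Hnq := CPL_dead_end_neg_atom _ two_step_conv_wf _ two_step_dead_end 0).
  assert (Hbot_root : forall B, ~ In (B, true) [(Bot, false)]) by (intros B [E | []]; discriminate).
  assert (Hempty_root : forall B, ~ In (B, true) (@nil (form * bool))) by (intros B []).
  split; [|split; [|split; [|split; [|split; [split|split]]]]].
  - intros A. split; intros W R H w G; apply CPLstar_de_morgan.
  - apply (not_axiom_CPL_of_root_refutation _ _ (Atom 0) Hbot_root).
    intros Hv. exact (Hv (Hall _) (Hall _)).
  - apply (not_axiom_CPL_of_root_refutation _ _ (Atom 0) Hbot_root).
    intros Hv. exact (Hv (Hall _) (Hall _)).
  - intros W R H G w A. apply SeqCPL_de_morgan.
  - apply (not_axiom_CPL_of_root_refutation _ _ (Atom 0) Hempty_root).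
    intros Hv. exact (Hnq (Hv Hq)).
  - apply (not_axiom_CPLstar_of_root_refutation _ (Atom 0)).
    intros Hv. exact (Hnq (Hv Hq)).
  - apply (not_axiom_CPL_of_root_refutation _ _ (Atom 0) Hempty_root).
    intros Hv. exact (Hnq (Hv Hq)).
  - apply (not_axiom_CPLstar_of_root_refutation _ (Atom 0)).
    intros Hv. exact (Hnq (Hv Hq)).
Qed.
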